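(* Let $\mathcal J\subseteq\mathbb R$ be an open interval, $\phi:\mathcal J\to\mathbb R$ three times continuously differentiable with $\phi''>0$, $K\ge1$, $\mathcal M=\mathcal J^K$, $h$ a primitive of $\sqrt{\phi''}$ with inverse $H=h^{-1}$ on $h(\mathcal J)$ (both applied componentwise to vectors), and $d_\phi(\boldsymbol x,\boldsymbol y)^2=\sum_{j=1}^K(h(x_j)-h(y_j))^2$. Let $P$ be a Borel probability measure on $\mathcal M$, $\boldsymbol X$ the identity map on $\mathcal M$, and assume $E[\|h(\boldsymbol X)\|^2]<\infty$. Let $\mathcal C=\{\boldsymbol y_1,\dots,\boldsymbol y_N\}\subset\mathcal M$ be a codebook of distinct points, let $S_i=\{\boldsymbol x\in\mathcal M: d_\phi(\boldsymbol x,\boldsymbol y_i)\le d_\phi(\boldsymbol x,\boldsymbol y_j)\ \forall j\}$ be the $d_\phi$-Voronoi cells, $B_i=\mathrm{int}(S_i)$, and assume $P(S_i\cap S_j)=0$ for $i\neq j$ and $P(S_i)>0$ for all $i$. Define $$\boldsymbol y_i^*=\frac{1}{P(S_i)}E_\phi[\boldsymbol X;S_i]:=H\Big(\frac{1}{P(S_i)}E[h(\boldsymbol X)\mathbf 1_{S_i}(\boldsymbol X)]\Big).$$ Then for all $i=1,\dots,N$, $$\boldsymbol y_i^*=\frac{1}{P(B_i)}E_\phi[\boldsymbol X;B_i]\in B_i\subset S_i,$$ where analogously $\frac{1}{P(B_i)}E_\phi[\boldsymbol X;B_i]=H\big(\frac{1}{P(B_i)}E[h(\boldsymbol X)\mathbf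 1_{B_i}(\boldsymbol X)]\big)$.
   Context: $\boldsymbol y_i^*$ is the $d_\phi$-centroid (the minimizer of $E[d_\phi(\boldsymbol X,\boldsymbol\xi)^2\mid \boldsymbol X\in S_i]$) of the cell $S_i$; the quantizer $q^*(\boldsymbol X)=\sum_i \boldsymbol y_i^*\mathbf 1_{S_i}(\boldsymbol X)$ minimizes the distortion $E[d_\phi(\boldsymbol X,q(\boldsymbol X))^2]$ among quantizers with the partition $\{S_i\}$. *)

From mathcomp Require Import all_boot all_order all_algebra.
From mathcomp Require Import all_classical all_reals all_analysis.
Import Order.TTheory GRing.Theory Num.Theory.
Import numFieldNormedType.Exports.

Set Implicit Arguments.
Unset Strict Implicit.
Unset Printing Implicit Defensive.

Local Open Scope ring_scope.
Local Open Scope classical_set_scope.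

(* The probability space is R^K realised as K.-tuple R with
   the library's product sigma-algebra (= Borel sigma-algebra of R^K);
   [tup2row] is the canonical identification, i.e. the random vector
   X is the identity map. *)
Definition tup2row (R : realType) (K : nat) (t : K.-tuple R) : 'rV[R]_K :=
  \row_j tnth t j.

Definition ev (R : realType) (K : nat) (A : set 'rV[R]_K) : set (K.-tuple R) :=
  (@tup2row R K) @^-1` A.

Definition cube (R : realType) (K : nat) (J : set R) : set 'rV[R]_K :=
  [set x | forall j, J (x ord0 j)].

Definition dphi (R : realType) (K : nat) (h : R -> R) (x y : 'rV[R]_K) : R :=
  Num.sqrt (\sum_(j < K) (h (x ord0 j) - h (y ord0 j)) ^+ 2).

Definition voronoi (R : realType) (K N : nat) (J : set R) (h : R -> R)
    (y : 'I_N -> 'rV[R]_K) (i : 'I_N) : set 'rV[R]_K :=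
  [set x | @cube R K J x /\ forall j : 'I_N, dphi h x (y i) <= dphi h x (y j)].

Definition phi_centroid (R : realType) (K : nat)
    (P : probability (K.-tuple R) R) (h H : R -> R) (A : set 'rV[R]_K)
    : 'rV[R]_K :=
  \row_j H ((fine (P (ev A)))^-1 *
            Rintegral P (ev A) (fun t => h (tnth t j))).

(* In the coordinates v = h(x), the gap d_phi(x, y_k)^2 - d_phi(x, y_i)^2 is an
   affine function of h(x).  Hence its P-mean over the cell S_i equals its value
   at the phi-centroid y_i^*, whose h-image is the mean of h(X) over S_i (and lies
   in h(J) by the intermediate value theorem).  This mean is positive: the gap is
   nonnegative on S_i and vanishes there only on S_i /\ S_k, a null set, while
   P(S_i) > 0.  So y_i^* is strictly closer to y_i than to every other codeword,
   and by continuity it lies in the interior B_i.  Conversely, since h is strictly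
   increasing, a point of S_i tied with some y_k is not interior: moving one
   coordinate breaks the tie in favour of y_k.  Thus S_i \ B_i is contained in the
   null set of ties, and the centroids of S_i and B_i coincide. *)

From mathcomp Require Import all_boot all_order all_algebra.
From mathcomp Require Import all_classical all_reals all_analysis.
From mathcomp Require Import ring lra measurable_realfun.
Import Order.TTheory GRing.Theory Num.Theory.
Import numFieldNormedType.Exports.

Set Implicit Arguments.
Unset Strict Implicit.
Unset Printing Implicit Defensive.

Local Open Scope ring_scope.
Local Open Scope classical_set_scope.

(* The factor (1/mu(D)) E[f; D] of phi_centroid; it is 0 when mu D is 0 or +oo. *)
Definition mean d (T : measurableType d) (R : realType)
    (mu : {measure set T -> \bar R}) (D : set T) (f : T -> R) : R :=
  (fine (mu D))^-1 * \int[mu]_(t in D) f t.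

Section mean.
Context d (T : measurableType d) (R : realType).
Variables (mu : {finite_measure set T -> \bar R}) (D : set T).
Hypotheses (mD : measurable D) (muD_gt0 : (0 < mu D)%E).
Implicit Types (f g : T -> R).

Let muD_fine_gt0 : 0 < fine (mu D).
Proof. by rewrite fine_gt0 // muD_gt0 /= ltey_eq fin_num_measure. Qed.

Lemma mean_cst c : mean mu D (fun=> c) = c.
Proof. by rewrite /mean Rintegral_cst // mulrC mulfK ?gt_eqF. Qed.

Lemma meanD f g : mu.-integrable D (EFin \o f) -> mu.-integrable D (EFin \o g) ->
  mean mu D (fun t => f t + g t) = mean mu D f + mean mu D g.
Proof. by move=> fi gi; rewrite /mean RintegralD // mulrDr. Qed.

Lemma meanB f g : mu.-integrable D (EFin \o f) -> mu.-integrable D (EFin \o g) ->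
  mean mu D (fun t => f t - g t) = mean mu D f - mean mu D g.
Proof. by move=> fi gi; rewrite /mean RintegralB // mulrBr. Qed.

Lemma meanZ r f : mu.-integrable D (EFin \o f) ->
  mean mu D (fun t => r * f t) = r * mean mu D f.
Proof. by move=> fi; rewrite /mean RintegralZl // mulrCA. Qed.

Lemma integrable_affine (I : Type) (s : seq I) c (w : I -> R) (f : I -> T -> R) :
  (forall j, mu.-integrable D (EFin \o f j)) ->
  mu.-integrable D (EFin \o (fun t => c + \sum_(j <- s) w j * f j t)).
Proof.
move=> fi; apply: (eq_integrable mD
  (fun t => (c%:E + \sum_(j <- s) (w j)%:E * (f j t)%:E)%E)).
  by move=> t _; rewrite /= EFinD -sumEFin; congr (_ + _)%E.
apply: (integrableD mD); first exact: finite_measure_integrable_cst.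
by apply: (integrable_sum mD) => j _; exact: (integrableZl mD _ (fi j)).
Qed.

Lemma mean_affine (I : Type) (s : seq I) c (w : I -> R) (f : I -> T -> R) :
  (forall j, mu.-integrable D (EFin \o f j)) ->
  mean mu D (fun t => c + \sum_(j <- s) w j * f j t) =
  c + \sum_(j <- s) w j * mean mu D (f j).
Proof.
move=> fi; elim: s c => [|j s IHs] c.
  by under eq_fun do rewrite big_nil; rewrite mean_cst big_nil.
under eq_fun do rewrite big_cons addrCA.
rewrite meanD ?meanZ ?IHs ?big_cons 1?addrCA //; last exact: integrable_affine.
apply: (eq_integrable mD (fun t => ((w j)%:E * (f j t)%:E)%E)) => [t _|].
  by rewrite /= EFinM.
exact: (integrableZl mD _ (fi j)).
Qed.

Lemma mean_gt0_nonnegligible f : mu.-integrable D (EFin \o f) ->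
  (forall t, D t -> 0 <= f t) -> ~ mu.-negligible (D `&` [set t | f t != 0]) ->
  0 < mean mu D f.
Proof.
move=> fi f_ge0 supp_f; rewrite /mean pmulr_rgt0 ?invr_gt0 //.
rewrite lt_def Rintegral_ge0 // andbT; apply: contra_notN supp_f => /eqP int_f0.
have mf := measurable_int mu fi.
have /(ae_eq_integral_abs mu mD mf) : (\int[mu]_(t in D) `|(f t)%:E|)%E = 0%E.
  rewrite (eq_integral (fun t => (f t)%:E)); last first.
    by move=> t; rewrite inE => Dt; rewrite gee0_abs // lee_fin f_ge0.
  by rewrite -[LHS]fineK; [exact: (congr1 EFin int_f0)|exact: integrable_fin_num fi].
by apply: negligibleS => t [Dt /eqP ft0] /(_ Dt) [].
Qed.

Lemma mean_gt0 f : mu.-integrable D (EFin \o f) ->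
  (forall t, D t -> 0 < f t) -> 0 < mean mu D f.
Proof.
move=> fi f_gt0; apply: mean_gt0_nonnegligible => // [t Dt|]; first exact/ltW/f_gt0.
have suppD : D `<=` D `&` [set t | f t != 0].
  by move=> t Dt; split=> //=; rewrite gt_eqF ?f_gt0.
move=> /(negligibleS suppD)/(negligibleP _ mD) muD0.
by move: muD_gt0; rewrite muD0 ltxx.
Qed.

Let integrableB_real f g : mu.-integrable D (EFin \o f) ->
  mu.-integrable D (EFin \o g) -> mu.-integrable D (EFin \o (fun t => f t - g t)).
Proof.
move=> fi gi; apply: (eq_integrable mD _ _ _ (integrableB mD fi gi)) => t _.
by rewrite /= EFinB.
Qed.

Lemma exists_le_mean f : mu.-integrable D (EFin \o f) ->
  exists2 t, D t & f t <= mean mu D f.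
Proof.
move=> fi; apply/not_exists2P => f_gt.
have ci := finite_measure_integrable_cst mu (mean mu D f) mD.
suff : 0 < mean mu D (fun t => f t - mean mu D f).
  by rewrite meanB // mean_cst subrr ltxx.
apply: mean_gt0 => [|t Dt]; first exact: integrableB_real.
by rewrite subr_gt0 ltNge; apply/negP; case: (f_gt t).
Qed.

Lemma exists_ge_mean f : mu.-integrable D (EFin \o f) ->
  exists2 t, D t & mean mu D f <= f t.
Proof.
move=> fi; apply/not_exists2P => f_lt.
have ci := finite_measure_integrable_cst mu (mean mu D f) mD.
suff : 0 < mean mu D (fun t => mean mu D f - f t).
  by rewrite meanB // mean_cst subrr ltxx.
apply: mean_gt0 => [|t Dt]; first exact: integrableB_real.
by rewrite subr_gt0 ltNge; apply/negP; case: (f_lt t).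
Qed.

Lemma measure_setD_null N : measurable N -> mu N = 0%E -> mu (D `\` N) = mu D.
Proof.
move=> mN muN0; rewrite measureD ?ltey_eq ?fin_num_measure //.
rewrite (@subset_measure0 _ _ _ mu (D `&` N) N) ?sube0 //.
exact: measurableI.
Qed.

Lemma mean_setD_null N f : measurable N -> mu N = 0%E ->
  mu.-integrable D (EFin \o f) -> mean mu (D `\` N) f = mean mu D f.
Proof.
move=> mN muN0 fi; rewrite /mean; congr ((fine _)^-1 * _).
  exact: measure_setD_null.
by rewrite /Rintegral [in RHS](negligible_integral mN mD fi muN0).
Qed.
End mean.

Lemma IVT_interval (R : realType) (J : set R) (h : R -> R) a b v :
  is_interval J -> {in J, continuous h} -> J a -> J b ->
  h a <= v <= h b -> exists2 c, J c & h c = v.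
Proof.
move=> J_itv h_cont Ja Jb hv.
have sub_J (l r : R) : J l -> J r -> `[l, r] `<=` J.
  by move=> Jl Jr z /=; rewrite in_itv /=; exact: J_itv.
have cont_on (l r : R) : J l -> J r -> {within `[l, r], continuous h}.
  move=> Jl Jr; apply: continuous_in_subspaceT => z; rewrite inE => zlr.
  by apply: h_cont; rewrite inE; exact: sub_J zlr.
have v_between : Num.min (h a) (h b) <= v <= Num.max (h a) (h b).
  by case/andP: hv => hav hvb; rewrite ge_min le_max hav hvb orbT.
have [ab|/ltW ba] := leP a b.
  have [c cab hc] := IVT ab (cont_on _ _ Ja Jb) v_between.
  by exists c => //; exact: sub_J cab.
have := IVT ba (cont_on _ _ Jb Ja); rewrite minC maxC => /(_ v v_between)[c cba hc].
by exists c => //; exact: sub_J cba.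
Qed.

Lemma gtr0_derive1_lt_interval (R : realType) (J : set R) (f : R -> R) :
  is_interval J -> (forall x, J x -> derivable f x 1) ->
  (forall x, J x -> 0 < f^`() x) -> {in J &, {homo f : a b / a < b}}.
Proof.
move=> J_itv df df_gt0 a b; rewrite !inE => Ja Jb ab.
have sub_J z : z \in `[a, b]%R -> J z.
  by rewrite in_itv /= => zab; exact: J_itv zab.
apply: (@gtr0_derive1_lt_cc _ f a b).
- by move=> z /subset_itv_oo_cc/sub_J; exact: df.
- by move=> z /subset_itv_oo_cc/sub_J; exact: df_gt0.
- by apply: derivable_within_continuous => z /sub_J; exact: df.
- by rewrite in_itv /= lexx ltW.
- by rewrite in_itv /= lexx ltW.
- exact: ab.
Qed.

Lemma incr_no_local_extremum (R : realType) (J : set R) (h : R -> R) x c :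
  {in J &, {homo h : a b / a < b}} -> c != 0 ->
  ~ (\forall s \near 0, J (x + s) /\ 0 <= c * (h (x + s) - h x)).
Proof.
move=> h_incr c_neq0 /nbhs_ballP[e /= e_gt0 near_e].
have e2_gt0 : 0 < e / 2 by rewrite divr_gt0.
have ball_e2 (s : R) : `|s| = e / 2 -> ball 0 e s.
  by move=> se; rewrite -ball_normE /= sub0r normrN se ltr_pdivrMr // ltr_pMr // ltr1n.
have [Jr hr] := near_e _ (ball_e2 _ (gtr0_norm e2_gt0)).
have [Jl hl] : J (x - e / 2) /\ 0 <= c * (h (x - e / 2) - h x).
  by apply: near_e; apply: ball_e2; rewrite normrN gtr0_norm.
have Jx : J x by have [] := near_e 0 (ballxx _ e_gt0); rewrite addr0.
have hxr : h x < h (x + e / 2) by apply: h_incr; rewrite ?inE // ltrDl.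
have hlx : h (x - e / 2) < h x by apply: h_incr; rewrite ?inE // gtrDl oppr_lt0.
by case: (ltgtP c 0) c_neq0 => // c0 _; nra.
Qed.

Lemma nbhs_along_line (R : realType) (V : normedModType R) (x e : V) (S : set V) :
  nbhs x S -> \forall s \near (0 : R), S (x + s *: e).
Proof.
have : x + s *: e @[s --> (0 : R)] --> x + 0 *: e.
  by apply: cvgD; [exact: cvg_cst | apply: cvgZ; [exact: cvg_id | exact: cvg_cst]].
by rewrite scale0r addr0; apply.
Qed.

Lemma sum_sqrB_affine (R : comPzRingType) (K : nat) (a b v : 'I_K -> R) :
  \sum_j (v j - b j) ^+ 2 - \sum_j (v j - a j) ^+ 2 =
  \sum_j (b j ^+ 2 - a j ^+ 2) + \sum_j 2 * (a j - b j) * v j.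
Proof. by rewrite -sumrB -big_split; apply: eq_bigr => j _ /=; ring. Qed.

Lemma tup2rowE (R : realType) (K : nat) (t : K.-tuple R) j :
  tup2row t ord0 j = tnth t j.
Proof. exact: mxE. Qed.

Definition dphi2 (R : realType) (K : nat) (h : R -> R) (x z : 'rV[R]_K) : R :=
  \sum_(j < K) (h (x ord0 j) - h (z ord0 j)) ^+ 2.

Lemma ler_dphi (R : realType) (K : nat) (h : R -> R) (x a b : 'rV[R]_K) :
  (dphi h x a <= dphi h x b) = (dphi2 h x a <= dphi2 h x b).
Proof. by rewrite ler_sqrt // sumr_ge0 // => j _; exact: sqr_ge0. Qed.

Lemma dphi2_continuous (R : realType) (K : nat) (J : set R) (h : R -> R)
    (z x : 'rV[R]_K) :
  {in J, continuous h} -> cube J x -> {for x, continuous (dphi2 h ^~ z)}.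
Proof.
move=> h_cont Jx; apply: (@cvg_big _ _ +%R 0 xpredT add_continuous) => [|j _].
  exact: nbhs_filter.
have hj : (fun w : 'rV[R]_K => h (w ord0 j) - h (z ord0 j)) @ x -->
    h (x ord0 j) - h (z ord0 j).
  apply: (@cvgB _ _ _ _ _ (fun w : 'rV[R]_K => h (w ord0 j)) (cst (h (z ord0 j)))).
  - exact: nbhs_filter.
  - apply: (@continuous_comp _ _ _ (fun w : 'rV[R]_K => w ord0 j) h).
      exact: coord_continuous.
    by apply: h_cont; rewrite inE; exact: Jx.
  - exact: (@cvg_cst _ _ _ _ (nbhs_filter x)).
by rewrite expr2; apply: (@cvgM _ _ _ (nbhs_filter x) _ _ _ _ hj hj).
Qed.

Lemma dphi2B_shift (R : realType) (K : nat) (h : R -> R) (x a b : 'rV[R]_K) j s :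
  let z := x + s *: delta_mx 0 j in
  dphi2 h z b - dphi2 h z a = dphi2 h x b - dphi2 h x a +
    2 * (h (a ord0 j) - h (b ord0 j)) * (h (x ord0 j + s) - h (x ord0 j)).
Proof.
move=> z; have zE l : z ord0 l = x ord0 l + (l == j)%:R * s.
  by rewrite !mxE eqxx /= mulrC eq_sym.
have affine w : dphi2 h w b - dphi2 h w a =
    \sum_l (h (b ord0 l) ^+ 2 - h (a ord0 l) ^+ 2) +
    \sum_l 2 * (h (a ord0 l) - h (b ord0 l)) * h (w ord0 l).
  exact: sum_sqrB_affine.
rewrite !affine -!addrA; congr (_ + _).
rewrite (bigD1 j) //= [X in _ = X + _](bigD1 j) //= zE eqxx mul1r.
rewrite (eq_bigr (fun l => 2 * (h (a ord0 l) - h (b ord0 l)) * h (x ord0 l))).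
  by ring.
by move=> l /negbTE l_neq_j; rewrite zE l_neq_j mul0r addr0.
Qed.

Section voronoi_interior.
Variables (R : realType) (K N : nat) (J : set R) (h : R -> R).
Variable y : 'I_N -> 'rV[R]_K.
Hypotheses (J_open : open J) (h_cont : {in J, continuous h}).
Hypothesis h_incr : {in J &, {homo h : a b / a < b}}.
Hypotheses (y_inj : injective y) (y_cube : forall i, cube J (y i)).

Lemma voronoiE i x : voronoi J h y i x <->
  cube J x /\ forall k, dphi2 h x (y i) <= dphi2 h x (y k).
Proof.
by split=> -[Jx le_x]; split=> // k; [rewrite -ler_dphi | rewrite ler_dphi].
Qed.

Lemma voronoi_interior_of_lt i x : cube J x ->
  (forall k, k != i -> dphi2 h x (y i) < dphi2 h x (y k)) ->
  (voronoi J h y i)° x.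
Proof.
move=> Jx lt_x.
have near_cube : \forall w \near x, cube J w.
  apply: (@filter_forall _ _ (fun j (w : 'rV[R]_K) => J (w ord0 j)) _ (nbhs_filter x)).
  by move=> j; apply: (@coord_continuous R 1 K ord0 j x); exact: open_nbhs_nbhs.
have near_le : \forall w \near x, forall k, dphi2 h w (y i) <= dphi2 h w (y k).
  apply: (@filter_forall _ _ (fun k w => dphi2 h w (y i) <= dphi2 h w (y k)) _
    (nbhs_filter x)) => k.
  have [->|ki] := eqVneq k i; first exact: filterE.
  have := @cvgr_gt _ _ _ (nbhs_filter x) _ _
    (cvgB (dphi2_continuous (z := y k) h_cont Jx)
          (dphi2_continuous (z := y i) h_cont Jx)) 0.
  rewrite subr_gt0 => /(_ (nbhs_filter x) (lt_x k ki)); apply: filterS => w.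
  by rewrite subr_gt0 => /ltW.
by apply: (filterS2 (nbhs_filter x)) near_cube near_le => w Jw le_w; apply/voronoiE.
Qed.

Lemma voronoi_interior_lt i k x : k != i -> (voronoi J h y i)° x ->
  dphi2 h x (y i) < dphi2 h x (y k).
Proof.
move=> k_neq_i Bx; have [Jx le_x] := (voronoiE i x).1 (interior_subset Bx).
rewrite lt_neqAle le_x andbT; apply/eqP => tie.
have [j hy_neq] : exists j, h (y i ord0 j) <> h (y k ord0 j).
  apply/existsNP => hy_eq; move/eqP: k_neq_i; apply; apply: y_inj.
  apply/rowP => l; apply: (inc_inj_in (le_mono_in h_incr)); rewrite ?inE.
  - exact: y_cube.
  - exact: y_cube.
  - exact/esym/hy_eq.
have near_Bx := nbhs_along_line (delta_mx 0 j) Bx.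
apply: (@incr_no_local_extremum _ J h (x ord0 j)
  (2 * (h (y i ord0 j) - h (y k ord0 j)))).
- exact: h_incr.
- by rewrite mulf_neq0 // subr_eq0; apply/eqP.
apply: filterS near_Bx => s /voronoiE[Jz /(_ k)].
rewrite -subr_ge0 dphi2B_shift tie subrr add0r; split => //.
by have := Jz j; rewrite !mxE eqxx mulr1.
Qed.

Lemma interior_voronoi i : (voronoi J h y i)° =
  [set x | cube J x /\ forall k, k != i -> dphi2 h x (y i) < dphi2 h x (y k)].
Proof.
apply/seteqP; split=> x; last by case=> Jx lt_x; exact: voronoi_interior_of_lt.
move=> Bx; split=> [|k k_neq_i]; last exact: voronoi_interior_lt.
by have /voronoiE[] := interior_subset Bx.
Qed.

End voronoi_interior.

Lemma measurable_ev_cube (R : realType) (K : nat) (J : set R) :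
  measurable J -> measurable (ev (@cube R K J)).
Proof.
move=> mJ; have -> : ev (@cube R K J) =
    \bigcap_(j in [set: 'I_K]) ((fun t : K.-tuple R => tnth t j) @^-1` J).
  apply/seteqP; split=> t /= Jt j; last by rewrite tup2rowE; exact: Jt.
  by move=> _ /=; rewrite -tup2rowE; exact: Jt.
apply: fin_bigcap_measurable => // j _; rewrite -[X in measurable X]setTI.
exact: measurable_tnth.
Qed.

Section sample_space.
Variables (R : realType) (K : nat) (J : set R) (h : R -> R).
Hypotheses (J_open : open J) (h_cont : {in J, continuous h}).

Let mJ : measurable J := open_measurable J_open.
Let mcube : measurable (ev (@cube R K J)) := @measurable_ev_cube R K J mJ.

Lemma measurable_fun_h_tnth j :
  measurable_fun (ev (@cube R K J)) (fun t => h (tnth t j)).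
Proof.
apply: (@measurable_comp _ _ _ _ _ _ J h _ (fun t : K.-tuple R => tnth t j)) => //.
- by move=> _ [t Jt <-]; rewrite -tup2rowE; exact: Jt.
- exact: open_continuous_measurable_fun.
- exact: measurable_funS (measurable_tnth j).
Qed.

Lemma measurable_fun_dphi2 z :
  measurable_fun (ev (@cube R K J)) (fun t => dphi2 h (tup2row t) z).
Proof.
rewrite /dphi2; under eq_fun do under eq_bigr do rewrite tup2rowE.
apply: measurable_sum => j; apply: measurable_funX.
by apply: measurable_funB => //; exact: measurable_fun_h_tnth.
Qed.

Lemma measurable_ev_voronoi (N : nat) (y : 'I_N -> 'rV[R]_K) i :
  measurable (ev (voronoi J h y i)).
Proof.
have -> : ev (voronoi J h y i) = ev (cube J) `&` \bigcap_(k in [set: 'I_N])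
    (ev (cube J) `&` [set t | dphi2 h (tup2row t) (y i) <= dphi2 h (tup2row t) (y k)]).
  apply/seteqP; split=> t.
    move=> /voronoiE[Jt le_t]; split=> [|k _]; first exact: Jt.
    by split; [exact: Jt | exact: le_t].
  move=> [Jt le_t]; apply/voronoiE; split=> [|k]; first exact: Jt.
  by have [] := le_t k I.
apply: measurableI => //; apply: fin_bigcap_measurable => // k _.
by apply: measurable_fun_le => //; exact: measurable_fun_dphi2.
Qed.
End sample_space.

Section voronoi_centroid.
Variables (R : realType) (K N : nat) (J : set R) (h : R -> R).
Variables (P : probability (K.-tuple R) R) (y : 'I_N -> 'rV[R]_K).
Hypotheses (J_itv : is_interval J) (J_open : open J).
Hypotheses (h_cont : {in J, continuous h}) (h_incr : {in J &, {homo h : a b / a < b}}).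
Hypothesis h_L2 :
  (\int[P]_(t in ev (@cube R K J)) (\sum_(j < K) h (tnth t j) ^+ 2)%:E < +oo)%E.
Hypotheses (y_inj : injective y) (y_cube : forall i, cube J (y i)).
Hypothesis S_null : forall i k, i != k ->
  P (ev (voronoi J h y i `&` voronoi J h y k)) = 0%E.
Hypothesis S_pos : forall i, (0 < P (ev (voronoi J h y i)))%E.

Local Notation S := (voronoi J h y).
Local Notation hX j := (fun t : K.-tuple R => h (tnth t j)).

Let mcube : measurable (ev (@cube R K J)) :=
  @measurable_ev_cube R K J (open_measurable J_open).

Lemma integrable_h_tnth j : P.-integrable (ev (cube J)) (EFin \o hX j).
Proof.
have mX := measurable_fun_h_tnth J_open h_cont.
have mX2 : measurable_fun (ev (cube J)) (fun t => \sum_(l < K) h (tnth t l) ^+ 2).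
  by apply: measurable_sum => l; apply: measurable_funX; exact: mX.
have sum_sqr_ge0 t : 0 <= \sum_(l < K) h (tnth t l) ^+ 2.
  by apply: sumr_ge0 => l _; exact: sqr_ge0.
apply: (le_integrable mcube (g := fun t => (1 + \sum_(l < K) h (tnth t l) ^+ 2)%:E)).
- by apply/measurable_EFinP; exact: mX.
- move=> t _ /=; rewrite lee_fin [leRHS]ger0_norm ?addr_ge0 //.
  have norm_le : `|h (tnth t j)| <= 1 + h (tnth t j) ^+ 2.
    rewrite -[X in _ <= 1 + X]real_normK ?num_real //.
    by have := normr_ge0 (h (tnth t j)); nra.
  apply: (le_trans norm_le); rewrite lerD2l (bigD1 j) //= lerDl.
  by rewrite sumr_ge0 // => l _; exact: sqr_ge0.
apply: (eq_integrable mcube (fun t => (1%:E + (\sum_(l < K) h (tnth t l) ^+ 2)%:E)%E)).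
  by move=> t _; rewrite EFinD.
apply: (integrableD mcube); first exact: finite_measure_integrable_cst.
apply/integrableP; split; first exact/measurable_EFinP.
by under eq_integral => t _ do rewrite gee0_abs ?lee_fin //.
Qed.

Lemma mean_h_tnth_image D j : measurable D -> D `<=` ev (cube J) ->
  (0 < P D)%E -> exists2 c, J c & h c = mean P D (hX j).
Proof.
move=> mD D_cube PD_gt0.
have hX_int : P.-integrable D (EFin \o hX j).
  exact: integrableS mcube mD D_cube (integrable_h_tnth j).
have [tl Dtl le_tl] := exists_le_mean mD PD_gt0 hX_int.
have [tr Dtr ge_tr] := exists_ge_mean mD PD_gt0 hX_int.
have J_tnth t l : D t -> J (tnth t l) by move/D_cube/(_ l); rewrite tup2rowE.
apply: (IVT_interval J_itv h_cont (J_tnth _ _ Dtl) (J_tnth _ _ Dtr)).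
by apply/andP; split; [exact: le_tl | exact: ge_tr].
Qed.

Lemma ev_voronoi_cube i : ev (S i) `<=` ev (cube J).
Proof. by move=> t /voronoiE[]. Qed.

Lemma integrable_h_tnth_voronoi i j : P.-integrable (ev (S i)) (EFin \o hX j).
Proof.
apply: integrableS mcube _ (@ev_voronoi_cube i) (integrable_h_tnth j).
exact: measurable_ev_voronoi.
Qed.

Lemma centroid_lt i k (x : 'rV[R]_K) : k != i ->
  (forall j, h (x ord0 j) = mean P (ev (S i)) (hX j)) ->
  dphi2 h x (y i) < dphi2 h x (y k).
Proof.
move=> k_neq_i hx; pose a l := h (y i ord0 l); pose b l := h (y k ord0 l).
pose gap t := dphi2 h (tup2row t) (y k) - dphi2 h (tup2row t) (y i).
have gapE : gap = fun t =>
    \sum_l (b l ^+ 2 - a l ^+ 2) + \sum_l 2 * (a l - b l) * h (tnth t l).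
  apply/funext => t; rewrite -(sum_sqrB_affine a b (fun l => h (tnth t l))).
  by congr (_ - _); apply: eq_bigr => l _; rewrite tup2rowE.
have mS := measurable_ev_voronoi J_open h_cont y i.
have mean_gap : mean P (ev (S i)) gap = dphi2 h x (y k) - dphi2 h x (y i).
  rewrite gapE (mean_affine mS (S_pos i)); last exact: integrable_h_tnth_voronoi.
  rewrite /dphi2 sum_sqrB_affine.
  by congr (_ + _); apply: eq_bigr => l _; rewrite hx.
have gap_int : P.-integrable (ev (S i)) (EFin \o gap).
  by rewrite gapE; apply: integrable_affine => //; exact: integrable_h_tnth_voronoi.
rewrite -subr_gt0 -mean_gap; apply: (mean_gt0_nonnegligible mS (S_pos i) gap_int).
  by move=> t /voronoiE[_ /(_ k)]; rewrite subr_ge0.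
move=> gap_negl; suff /(negligibleP _ mS) : P.-negligible (ev (S i)).
  by move=> PS0; move: (S_pos i); rewrite PS0 ltxx.
have tie_negl : P.-negligible (ev (S i `&` S k)).
  apply/negligibleP; first by apply: measurableI; exact: measurable_ev_voronoi.
  by apply: S_null; rewrite eq_sym.
apply: negligibleS (negligibleU gap_negl tie_negl) => t Sit.
have [gap_t0|] := eqVneq (gap t) 0; last by left.
have /voronoiE[Jt le_t] := Sit.
right; split=> //; apply/voronoiE; split=> // l.
by move/eqP: gap_t0; rewrite subr_eq0 => /eqP ->.
Qed.

Lemma centroid_preimage i : exists2 x : 'rV[R]_K, cube J x &
  forall j, h (x ord0 j) = mean P (ev (S i)) (hX j).
Proof.
have hX_image j : exists c, J c /\ h c = mean P (ev (S i)) (hX j).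
  have [c Jc hc] := mean_h_tnth_image j (measurable_ev_voronoi J_open h_cont y i)
    (@ev_voronoi_cube i) (S_pos i).
  by exists c.
have [c hc] := choice hX_image.
by exists (\row_j c j) => j; rewrite mxE; case: (hc j).
Qed.

Definition voronoi_ties i : set (K.-tuple R) :=
  \bigcup_(k in [set k | k != i]) ev (S i `&` S k).

Lemma measurable_voronoi_ties i : measurable (voronoi_ties i).
Proof.
apply: fin_bigcup_measurable => [|k _]; first exact: finite_finset.
by apply: measurableI; exact: measurable_ev_voronoi.
Qed.

Lemma voronoi_ties_null i : P (voronoi_ties i) = 0%E.
Proof.
apply/eqP; rewrite -measure_le0.
have mI k : measurable (ev (S i `&` S k)).
  by apply: measurableI; exact: measurable_ev_voronoi.
apply: le_trans (content_sub_fsum P finite_finset (fun k _ => mI k)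
  (measurable_voronoi_ties i) (@subset_refl _ _)) _.
by rewrite fsbig1 // => k /= k_neq_i; apply: S_null; rewrite eq_sym.
Qed.

Lemma ev_interior_voronoi i : ev (S i)° = ev (S i) `\` voronoi_ties i.
Proof.
rewrite /ev (interior_voronoi J_open h_cont h_incr y_inj y_cube i).
apply/seteqP; split=> t /=.
  move=> [Jt lt_t]; split.
    apply/voronoiE; split=> // k; have [->//|/lt_t/ltW//] := eqVneq k i.
  by move=> [k /= k_neq_i [_ /voronoiE[_ /(_ i)]]]; rewrite leNgt lt_t.
move=> [/voronoiE[Jt le_t] not_tie]; split=> // k k_neq_i.
rewrite lt_neqAle le_t andbT; apply/eqP => tie; apply: not_tie.
exists k => //; split; first exact/voronoiE.
by apply/voronoiE; split=> // l; rewrite -tie.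
Qed.
End voronoi_centroid.

Lemma phi_centroidE (R : realType) (K : nat) (P : probability (K.-tuple R) R)
    (h H : R -> R) (A : set 'rV[R]_K) :
  phi_centroid P h H A = \row_j H (mean P (ev A) (fun t => h (tnth t j))).
Proof. by []. Qed.

Theorem corollary1 (R : realType) (J : set R) (phi h H : R -> R) (K N : nat)
    (P : probability (K.-tuple R) R) (y : 'I_N -> 'rV[R]_K) :
  (* J is an open interval *)
  is_interval J -> open J ->
  (* phi is C^3 on J *)
  (forall x, J x -> forall k, (k < 3)%N -> derivable (derive1n k phi) x 1) ->
  (forall x, J x -> {for x, continuous (derive1n 3 phi)}) ->
  (* phi'' > 0 on J *)
  (forall x, J x -> 0 < derive1n 2 phi x) ->
  (* K >= 1 *)
  (1 <= K)%N ->
  (* h is a primitive of sqrt(phi'') on J, H its inverse on h(J) *)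
  (forall x, J x -> is_derive x 1 h (Num.sqrt (derive1n 2 phi x))) ->
  (forall x, J x -> H (h x) = x) ->
  (* P is a probability on M = J^K *)
  P (ev (@cube R K J)) = 1%E ->
  (* E ||h(X)||^2 < oo *)
  (\int[P]_(t in ev (@cube R K J)) (\sum_(j < K) h (tnth t j) ^+ 2)%:E < +oo)%E ->
  (* codebook of distinct points of M *)
  injective y -> (forall i, @cube R K J (y i)) ->
  (* P(S_i /\ S_j) = 0 for i <> j, P(S_i) > 0 *)
  (forall i j, i != j ->
     P (ev (voronoi J h y i `&` voronoi J h y j)) = 0%E) ->
  (forall i, (0 < P (ev (voronoi J h y i)))%E) ->
  forall i : 'I_N,
    let S := voronoi J h y i in
    let B := interior S in
    (0 < P (ev B))%E /\
    phi_centroid P h H S = phi_centroid P h H B /\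
    B (phi_centroid P h H S) /\
    B `<=` S.
Proof.
move=> J_itv J_open _ _ phi2_gt0 _ h_deriv HK _ h_L2 y_inj y_cube S_null S_pos i S B.
have h_der1 x : J x -> derivable h x 1 by move=> /h_deriv[].
have h_cont : {in J, continuous h}.
  move=> x; rewrite inE => /h_der1 /derivable1_diffP; exact: differentiable_continuous.
have h_incr : {in J &, {homo h : a b / a < b}}.
  apply: gtr0_derive1_lt_interval => // x Jx; have [_ dh] := h_deriv x Jx.
  by rewrite derive1E dh sqrtr_gt0 phi2_gt0.
have mS := measurable_ev_voronoi J_open h_cont y i.
have evB : ev B = ev S `\` voronoi_ties J h y i :=
  ev_interior_voronoi J_open h_cont h_incr y_inj y_cube i.
have [x Jx hx] := centroid_preimage J_itv J_open h_cont h_L2 S_pos i.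
have centroid_x : phi_centroid P h H S = x.
  by apply/rowP => j; rewrite phi_centroidE !mxE -hx HK.
have mT : measurable (voronoi_ties J h y i) := measurable_voronoi_ties y J_open h_cont i.
have PT : P (voronoi_ties J h y i) = 0%E := voronoi_ties_null J_open h_cont S_null i.
split; [|split; [|split]].
- by rewrite evB measure_setD_null //; exact: S_pos.
- rewrite !phi_centroidE; apply/rowP => j; rewrite !mxE evB.
  congr H; apply/esym/mean_setD_null => //.
  exact: integrable_h_tnth_voronoi J_open h_cont h_L2 i j.
- rewrite centroid_x /B interior_voronoi //; split=> // k k_neq_i.
  have centroid_lt_k := centroid_lt J_open h_cont h_L2 S_null S_pos.
  exact: centroid_lt_k i k x k_neq_i hx.
- exact: interior_subset.
Qed.
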